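(* Let $(\pi,T,\eta,\mu)$ be a symmetric random system (in particular $T$-invariant and time reversible). Then the Markov operator $P_{\eta,T}$ is self-adjoint on $L^2(X,\mu)$. In particular $P_{\eta,T^{-1}}=P_{\eta,T}$.
   Context: A measured fibration is a measurable map $\pi:\mathcal M\to X$ between Borel spaces together with a family $\eta=\{\eta_x\}_{x\in X}$ of probability measures on $\mathcal M$ with $\eta_x(\pi^{-1}(x))=1$ for every $x$, measurable in the sense that $x\mapsto\eta_x(f)=\int f\,d\eta_x$ is Borel for every Borel $f:\mathcal M\to[0,\infty]$. A random system $(\pi,T,\eta,\mu)$ consists of such a measured fibration, a measurable map $T:\mathcal M\to\mathcal M$, and a probability measure $\mu$ on $X$; $\mu\circ\eta$ is the probability measure on $\mathcal M$ with $(\mu\circ\eta)(f)=\int_X\eta_x(f)\,d\mu(x)$. The Markov operator is $(P_{\eta,T}f)(x)=\int_{\pi^{-1}(x)}f(\pi(T(\xi)))\,d\eta_x(\xi)$. The random system is $T$-invariant if $T$ is a measurable isomorphism and $\nu:=\mu\circ\eta$ satisfies $T_*\nu=\nu$. It is time reversible if there is a measurable isomorphism $\tilde J:\mathcal M\to\mathcal M$ mapping fibers of $\pi$ to fibers, with $\tilde J_*\nu=\nu$ and $T\circ\tilde J=\tilde J\circ T^{-1}$; $\tilde J$ induces $J:X\to X$ with $J\circ\pi=\pi\circ\tilde J$. An automorphism (symmetry) of the random system is a measurable isomorphism $\tilde S:\mathcal M\to\mathcal M$ with $T\circ\tilde S=\tilde S\circ T$, mapping fibers to fibers and with $\tilde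 S_*\nu=\nu$; it induces $S:X\to X$ with $S\circ\pi=\pi\circ\tilde S$. A $T$-invariant, time reversible random system with time-reversing map $\tilde J$ is called symmetric if there exists an automorphism $\tilde S$ whose induced map $S$ on $X$ coincides with the map $J$ induced by $\tilde J$. *)

From HB Require Import structures.
From mathcomp Require Import all_boot all_order all_algebra.
From mathcomp Require Import all_classical all_reals all_analysis.
From mathcomp Require Import measurable_realfun.
Set Implicit Arguments. Unset Strict Implicit. Unset Printing Implicit Defensive.
Import Order.TTheory GRing.Theory Num.Theory.
Local Open Scope classical_set_scope.
Local Open Scope ring_scope.

Section RandomSystems.
Context {R : realType} {dX dM : measure_display}
  {X : measurableType dX} {M : measurableType dM}.

Definition measurable_iso (F Finv : M -> M) :=
  [/\ measurable_fun setT F, measurable_fun setT Finv,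
      cancel F Finv & cancel Finv F].

Definition measured_fibration (pi : M -> X) (eta : X -> probability M R) :=
  [/\ measurable_fun setT pi,
      (forall x : X, eta x (pi @^-1` [set x]) = 1%E) &
      (forall f : M -> \bar R, measurable_fun setT f -> (forall xi, (0 <= f xi)%E) ->
         measurable_fun setT (fun x => (\int[eta x]_xi f xi)%E))].

Definition compose_measure (mu : probability X R) (eta : X -> probability M R)
  (A : set M) : \bar R := \int[mu]_x eta x A.

Definition preserves (mu : probability X R) (eta : X -> probability M R)
  (F : M -> M) :=
  forall A : set M, measurable A ->
    compose_measure mu eta (F @^-1` A) = compose_measure mu eta A.

Definition fiber_preserving (pi : M -> X) (F : M -> M) :=
  forall xi xi', pi xi = pi xi' -> pi (F xi) = pi (F xi').

Definition induced_map (pi : M -> X) (F : M -> M) (f : X -> X) :=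
  forall xi, f (pi xi) = pi (F xi).

Definition markov_op (pi : M -> X) (eta : X -> probability M R) (T : M -> M)
  (f : X -> R) (x : X) : R :=
  Rintegral (eta x) (pi @^-1` [set x]) (fun xi => f (pi (T xi))).

Definition sq_integrable (mu : probability X R) (f : X -> R) :=
  measurable_fun setT f /\ mu.-integrable setT (fun x => (f x ^+ 2)%:E).

End RandomSystems.

From HB Require Import structures.
From mathcomp Require Import all_boot all_order all_algebra.
From mathcomp Require Import all_classical all_reals all_analysis.
From mathcomp Require Import measurable_realfun.
From mathcomp Require Import lra.
Set Implicit Arguments. Unset Strict Implicit. Unset Printing Implicit Defensive.
Import Order.TTheory GRing.Theory Num.Theory.
Local Open Scope classical_set_scope.
Local Open Scope ring_scope.

(* Write nu = mu o eta.  For a map F preserving nu, Fubini along the fibers gives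
   <P_F u, v>_mu = \int u (pi (F z)) v (pi z) dnu(z).  Transporting nu successively
   by the time reversal Jt, by T and by the symmetry St, which induce the same map
   J on X, turns \int f (pi (T z)) g (pi z) dnu into \int f (pi z) g (pi (T z)) dnu:
   this is the self-adjointness of P_T.  Combined with the T-invariance of nu the
   same identity gives <P_{T^-1} f, g> = <P_T f, g> for every g in L^2, hence
   P_{T^-1} f = P_T f almost everywhere. *)

Section square_integrable.
Context (R : realType) (d : measure_display) (T : measurableType d).
Implicit Types a b : T -> R.

Lemma integrable_mul_of_sq (m : {measure set T -> \bar R}) a b :
  measurable_fun setT a -> measurable_fun setT b ->
  m.-integrable setT (fun x => (a x ^+ 2)%:E) ->
  m.-integrable setT (fun x => (b x ^+ 2)%:E) ->
  m.-integrable setT (fun x => (a x * b x)%:E).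
Proof.
move=> ma mb ia ib.
apply: (le_integrable measurableT _ _ (integrableD measurableT ia ib)).
  by apply/measurable_EFinP; exact: measurable_funM.
move=> x _ /=; rewrite lee_fin [leRHS]ger0_norm ?addr_ge0 ?sqr_ge0// normrM.
rewrite -[a x ^+ 2]real_normK ?num_real// -[b x ^+ 2]real_normK ?num_real//.
have := sqr_ge0 `|a x|; have := sqr_ge0 `|b x|.
have := sqr_ge0 (`|a x| - `|b x|); rewrite sqrrB; lra.
Qed.

Lemma integrable_sqB_of_sq (m : {measure set T -> \bar R}) a b :
  measurable_fun setT a -> measurable_fun setT b ->
  m.-integrable setT (fun x => (a x ^+ 2)%:E) ->
  m.-integrable setT (fun x => (b x ^+ 2)%:E) ->
  m.-integrable setT (fun x => ((a x - b x) ^+ 2)%:E).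
Proof.
move=> ma mb ia ib.
have i2 := integrableD measurableT
  (integrableZl measurableT 2 ia) (integrableZl measurableT 2 ib).
apply: (le_integrable measurableT _ _ i2).
  by apply/measurable_EFinP/measurable_funX/measurable_funB.
move=> x _ /=; rewrite lee_fin ger0_norm ?sqr_ge0// ger0_norm; last first.
  by rewrite addr_ge0// mulr_ge0// sqr_ge0.
have := sqr_ge0 (a x + b x); rewrite sqrrD sqrrB; lra.
Qed.

Lemma ae_eq_of_integral_mul (m : {measure set T -> \bar R}) a b :
  measurable_fun setT a -> measurable_fun setT b ->
  m.-integrable setT (fun x => (a x ^+ 2)%:E) ->
  m.-integrable setT (fun x => (b x ^+ 2)%:E) ->
  (forall g : T -> R, measurable_fun setT g ->
     m.-integrable setT (fun x => (g x ^+ 2)%:E) ->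
     (\int[m]_x (a x * g x)%:E = \int[m]_x (b x * g x)%:E)%E) ->
  {ae m, forall x, a x = b x}.
Proof.
move=> ma mb ia ib ab; pose D x := a x - b x.
have mD : measurable_fun setT D by exact: measurable_funB.
have iD : m.-integrable setT (fun x => (D x ^+ 2)%:E).
  exact: integrable_sqB_of_sq.
have iaD := integrable_mul_of_sq ma mD ia iD.
have iD0 : (\int[m]_x `|(D x ^+ 2)%:E| = 0)%E.
  under eq_integral do rewrite abse_EFin ger0_norm ?sqr_ge0// expr2 {1}/D mulrBl.
  by rewrite integralB_EFin ?(ab D)// ?subee ?integrable_fin_num//;
    exact: integrable_mul_of_sq.
have mD2 : measurable_fun setT (fun x => (D x ^+ 2)%:E).
  exact/measurable_EFinP/measurable_funX.
move/(ae_eq_integral_abs _ measurableT mD2): iD0; apply: filterS => x /(_ I) /= /eqP.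
by rewrite eqe sqrf_eq0 subr_eq0 => /eqP.
Qed.

Context (P : probability T R).

Lemma integrable_of_sq a : measurable_fun setT a ->
  P.-integrable setT (fun x => (a x ^+ 2)%:E) -> P.-integrable setT (fun x => (a x)%:E).
Proof.
move=> ma ia.
have i1 := finite_measure_integrable_cst P 1 measurableT.
apply: (le_integrable measurableT _ _ (integrableD measurableT ia i1)).
  exact/measurable_EFinP.
move=> x _ /=; rewrite lee_fin [leRHS]ger0_norm ?addr_ge0 ?sqr_ge0//.
rewrite -[a x ^+ 2]real_normK ?num_real//.
have := sqr_ge0 `|a x|; have := sqr_ge0 (`|a x| - 1); rewrite sqrrB; lra.
Qed.

Lemma sqr_fine_integral_le a : measurable_fun setT a ->
  (((fine (\int[P]_x (a x)%:E)) ^+ 2)%:E <= \int[P]_x (a x ^+ 2)%:E)%E.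
Proof.
move=> ma; have [->|a2oo] := eqVneq (\int[P]_x (a x ^+ 2)%:E)%E +oo%E.
  exact: leey.
have ia2 : P.-integrable setT (fun x => (a x ^+ 2)%:E).
  apply/integrableP; split; first exact/measurable_EFinP/measurable_funX.
  by under eq_integral do rewrite abse_EFin ger0_norm ?sqr_ge0//; rewrite ltey.
have ia := integrable_of_sq ma ia2.
set c := fine _; have cE : (\int[P]_x (a x)%:E = c%:E)%E.
  by rewrite fineK// integrable_fin_num.
have ic := finite_measure_integrable_cst P (c ^+ 2) measurableT.
have ilin := integrableB measurableT (integrableZl measurableT (2 * c) ia) ic.
apply: le_trans (le_integral measurableT ilin ia2 _); last first.
  move=> x _; rewrite /= -EFinM -EFinB lee_fin.
  have := sqr_ge0 (a x - c); rewrite sqrrB; lra.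
rewrite integralB//; last exact: integrableZl.
have P1 : (P : {measure set T -> \bar R}) setT = 1%E by exact: probability_setT.
rewrite integralZl// cE (integral_cst P measurableT (c ^+ 2)%:E) P1 mule1.
by rewrite -EFinM -EFinB lee_fin; lra.
Qed.

End square_integrable.

Section measured_fibration.
Context (R : realType) (dX dM : measure_display)
  (X : measurableType dX) (M : measurableType dM).
Hypothesis measurable_points : forall x : X, measurable [set x].
Variables (pi : M -> X) (eta : X -> probability M R) (mu : probability X R).
Hypothesis fibration : measured_fibration pi eta.
Local Open Scope ereal_scope.

Local Notation fiber x := (pi @^-1` [set x]).

Lemma measurable_pi : measurable_fun setT pi.
Proof. by case: fibration. Qed.

Lemma measurable_fiber x : measurable (fiber x).
Proof. by rewrite -[X in measurable X]setTI; exact: measurable_pi. Qed.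

Lemma eta_fiber x : (eta x : {measure set M -> \bar R}) (fiber x) = 1.
Proof. by case: fibration => _ + _; apply. Qed.

Lemma measurable_integral_eta_ge0 (h : M -> \bar R) :
  (forall z, 0 <= h z) -> measurable_fun setT h ->
  measurable_fun setT (fun x => \int[eta x]_z h z).
Proof. by case: fibration => _ _ + h0 mh; apply. Qed.

Lemma measurable_integral_eta (h : M -> \bar R) : measurable_fun setT h ->
  measurable_fun setT (fun x => \int[eta x]_z h z).
Proof.
move=> mh; apply: (eq_measurable_fun (fun x =>
    \int[eta x]_z h^\+ z - \int[eta x]_z h^\- z)).
  by move=> x _; rewrite [RHS]integralE.
by apply: emeasurable_funB; apply: measurable_integral_eta_ge0;
  [exact: funepos_ge0|exact: measurable_funepos|
   exact: funeneg_ge0|exact: measurable_funeneg].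
Qed.

Lemma measurable_eta_set (A : set M) : measurable A ->
  measurable_fun setT (fun x => eta x A).
Proof.
move=> mA; apply: (eq_measurable_fun (fun x => \int[eta x]_z (\1_A z)%:E)).
  by move=> x _; rewrite integral_indic// setIT.
apply: measurable_integral_eta_ge0 => [z|]; first by rewrite lee_fin.
exact/measurable_EFinP/measurable_indic.
Qed.

(* [nu = mu o eta] is realised as the composition of the constant kernel
   [mu] with [eta], so that [integral_kcomp] provides Fubini's theorem. *)
Definition eta_kernel (p : unit * X) : {measure set M -> \bar R} := eta p.2.

Lemma measurable_eta_kernel U : measurable U ->
  measurable_fun [set: unit * X] (eta_kernel ^~ U).
Proof. by move=> mU; exact: measurableT_comp (measurable_eta_set mU) _. Qed.

HB.instance Definition _ :=
  isKernel.Build _ _ _ _ R eta_kernel measurable_eta_kernel.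

Lemma eta_kernel_setT p : eta_kernel p [set: M] = 1.
Proof. exact: probability_setT. Qed.

HB.instance Definition _ :=
  Kernel_isProbability.Build _ _ _ _ R eta_kernel eta_kernel_setT.

Definition mu_kernel := kprobability
  (measurable_cst (mu : pprobability X R) : measurable_fun [set: unit] _).

Definition nu : {measure set M -> \bar R} := (mu_kernel \; eta_kernel) tt.

Lemma ge0_integral_nu (h : M -> \bar R) :
  (forall z, 0 <= h z) -> measurable_fun setT h ->
  \int[nu]_z h z = \int[mu]_x \int[eta x]_z h z.
Proof. exact: integral_kcomp. Qed.

Lemma integrable_integral_eta_ge0 (h : M -> \bar R) : (forall z, 0 <= h z) ->
  nu.-integrable setT h -> mu.-integrable setT (fun x => \int[eta x]_z h z).
Proof.
move=> h0 /integrableP[mh hoo]; apply/integrableP; split.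
  exact: measurable_integral_eta_ge0.
under eq_integral do rewrite gee0_abs ?integral_ge0//.
by rewrite -ge0_integral_nu//; under eq_integral do rewrite -[h _]gee0_abs//.
Qed.

Lemma integral_nu (h : M -> \bar R) : nu.-integrable setT h ->
  \int[nu]_z h z = \int[mu]_x \int[eta x]_z h z.
Proof.
move=> ih; have mh := measurable_int _ ih.
have [mhp mhn] := (measurable_funepos mh, measurable_funeneg mh).
rewrite integralE !ge0_integral_nu// -integralB//.
- by apply: eq_integral => x _; rewrite [RHS]integralE.
- exact/integrable_integral_eta_ge0/integrable_funepos.
- exact/integrable_integral_eta_ge0/integrable_funeneg.
Qed.

Lemma integral_fiber x (h : M -> \bar R) : measurable_fun setT h ->
  \int[eta x]_(z in fiber x) h z = \int[eta x]_z h z.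
Proof.
move=> mh; have mC := measurableC (measurable_fiber x).
have fiberC0 : eta x (~` fiber x) = 0.
  rewrite probability_setC; last exact: measurable_fiber.
  by rewrite eta_fiber subee.
have negligible_fiberC (g : M -> \bar R) : (forall z, 0 <= g z) ->
    measurable_fun setT g -> \int[eta x]_(z in fiber x) g z = \int[eta x]_z g z.
  move=> g0 mg; have g0T z (_ : setT z) := g0 z.
  by rewrite [RHS](ge0_negligible_integral mC measurableT mg g0T fiberC0) setTD setCK.
rewrite integralE [RHS]integralE !negligible_fiberC//.
- exact: measurable_funeneg.
- exact: measurable_funepos.
Qed.

Lemma integral_eta_comp_pi x (u : X -> \bar R) : measurable_fun setT u ->
  \int[eta x]_z u (pi z) = u x.
Proof.
move=> mu'; rewrite -integral_fiber; last exact: measurableT_comp mu' measurable_pi.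
rewrite (eq_integral (fun=> u x)); last by move=> z; rewrite inE => ->.
rewrite integral_cst; last exact: measurable_fiber.
by rewrite eta_fiber mule1.
Qed.

Definition nu_preserving (F : M -> M) :=
  measurable_fun setT F /\ preserves mu eta F.

Lemma nu_preserving_inv (F Finv : M -> M) :
  measurable_iso F Finv -> preserves mu eta F -> nu_preserving Finv.
Proof.
move=> [_ mFinv FK _] pF; split => // A mA.
have mB : measurable (Finv @^-1` A) by rewrite -[X in measurable X]setTI; exact: mFinv.
rewrite -(pF _ mB); congr compose_measure.
by apply/seteqP; split => z /=; rewrite FK.
Qed.

Lemma ge0_integral_nu_comp (F : M -> M) (h : M -> \bar R) : nu_preserving F ->
  (forall z, 0 <= h z) -> measurable_fun setT h ->
  \int[nu]_z h (F z) = \int[nu]_z h z.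
Proof.
move=> [mF pF] h0 mh.
have := ge0_integral_pushforward mF nu measurableT mh (fun z _ => h0 z).
rewrite preimage_setT => <-.
apply: eq_measure_integral => A mA _.
transitivity (compose_measure mu eta (F @^-1` A)); first by [].
by rewrite pF.
Qed.

Lemma integral_nu_comp (F : M -> M) (h : M -> \bar R) : nu_preserving F ->
  measurable_fun setT h -> \int[nu]_z h (F z) = \int[nu]_z h z.
Proof.
move=> pF mh; rewrite integralE [RHS]integralE.
rewrite -(ge0_integral_nu_comp pF (funepos_ge0 h) (measurable_funepos mh)).
rewrite -(ge0_integral_nu_comp pF (funeneg_ge0 h) (measurable_funeneg mh)).
by congr (_ - _); apply: eq_integral => z _; rewrite !(funeposE, funenegE).
Qed.

Lemma ge0_integral_nu_comp_pi (F : M -> M) (u : X -> \bar R) : nu_preserving F ->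
  (forall x, 0 <= u x) -> measurable_fun setT u ->
  \int[nu]_z u (pi (F z)) = \int[mu]_x u x.
Proof.
move=> pF u0 mu'; have muPi := measurableT_comp mu' measurable_pi.
rewrite (ge0_integral_nu_comp (h := fun z => u (pi z)) pF)// ge0_integral_nu//.
by apply: eq_integral => x _; rewrite integral_eta_comp_pi.
Qed.

Lemma markov_opE (F : M -> M) (u : X -> R) x :
  measurable_fun setT F -> measurable_fun setT u ->
  markov_op pi eta F u x = fine (\int[eta x]_z (u (pi (F z)))%:E).
Proof.
move=> mF mu'; rewrite /markov_op /Rintegral integral_fiber//.
exact/measurable_EFinP/(measurableT_comp mu')/(measurableT_comp measurable_pi).
Qed.

Lemma measurable_markov_op (F : M -> M) (u : X -> R) :
  measurable_fun setT F -> measurable_fun setT u ->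
  measurable_fun setT (markov_op pi eta F u).
Proof.
move=> mF mu'.
apply: (eq_measurable_fun (fun x => fine (\int[eta x]_z (u (pi (F z)))%:E))).
  by move=> x _; rewrite markov_opE.
apply: measurableT_comp; first exact: fine_measurable.
apply: measurable_integral_eta.
exact/measurable_EFinP/(measurableT_comp mu')/(measurableT_comp measurable_pi).
Qed.

Lemma integral_nu_sq_comp_pi (F : M -> M) (u : X -> R) : nu_preserving F ->
  measurable_fun setT u ->
  \int[nu]_z (u (pi (F z)) ^+ 2)%:E = \int[mu]_x (u x ^+ 2)%:E.
Proof.
move=> pF mu'; apply: (ge0_integral_nu_comp_pi (u := fun x => (u x ^+ 2)%:E)) => //.
  by move=> x; rewrite lee_fin sqr_ge0.
exact/measurable_EFinP/measurable_funX.
Qed.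

Lemma integrable_nu_sq_comp_pi (F : M -> M) (u : X -> R) : nu_preserving F ->
  sq_integrable mu u -> nu.-integrable setT (fun z => (u (pi (F z)) ^+ 2)%:E).
Proof.
move=> pF [mu' /integrableP[_ iu]]; apply/integrableP; split.
  exact/measurable_EFinP/measurable_funX/(measurableT_comp mu')/
    (measurableT_comp measurable_pi)/pF.1.
under eq_integral do rewrite abse_EFin ger0_norm ?sqr_ge0//.
rewrite integral_nu_sq_comp_pi//.
by under eq_integral do rewrite -[(_ ^+ 2)%:E]gee0_abs ?lee_fin ?sqr_ge0//.
Qed.

(* Jensen's inequality on each fiber. *)
Lemma sq_integrable_markov_op (F : M -> M) (u : X -> R) : nu_preserving F ->
  sq_integrable mu u -> sq_integrable mu (markov_op pi eta F u).
Proof.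
move=> pF su; have [mu' _] := su; have mF := pF.1.
have muF : measurable_fun setT (fun z => u (pi (F z))).
  exact/(measurableT_comp mu')/(measurableT_comp measurable_pi).
have mP := measurable_markov_op mF mu'.
split => //; apply/integrableP; split; first exact/measurable_EFinP/measurable_funX.
under eq_integral do rewrite abse_EFin ger0_norm ?sqr_ge0//.
apply: (@le_lt_trans _ _ (\int[mu]_x \int[eta x]_z (u (pi (F z)) ^+ 2)%:E)).
  apply: ge0_le_integral => //.
  - by move=> x _; rewrite lee_fin sqr_ge0.
  - exact/measurable_EFinP/measurable_funX.
  - by apply: measurable_integral_eta_ge0 => [z|];
      [rewrite lee_fin sqr_ge0|exact/measurable_EFinP/measurable_funX].
  - by move=> x _; rewrite markov_opE//; exact: sqr_fine_integral_le.
rewrite -integral_nu; last exact: integrable_nu_sq_comp_pi.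
by move/integrableP: (integrable_nu_sq_comp_pi pF su) => [_];
  under eq_integral do rewrite abse_EFin ger0_norm ?sqr_ge0//.
Qed.

Lemma ae_integrable_eta (F : M -> M) (u : X -> R) : nu_preserving F ->
  measurable_fun setT u -> mu.-integrable setT (fun x => (u x)%:E) ->
  {ae mu, forall x, (eta x).-integrable setT (fun z => (u (pi (F z)))%:E)}.
Proof.
move=> pF mu' /integrableP[_ iu].
have muF : measurable_fun setT (fun z => (u (pi (F z)))%:E).
  exact/measurable_EFinP/(measurableT_comp mu')/
    (measurableT_comp measurable_pi)/pF.1.
have mabs : measurable_fun setT (fun z => `|(u (pi (F z)))%:E|).
  exact: measurableT_comp.
have iabs : mu.-integrable setT (fun x => \int[eta x]_z `|(u (pi (F z)))%:E|).
  apply/integrableP; split; first exact: measurable_integral_eta_ge0.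
  under eq_integral do rewrite gee0_abs ?integral_ge0//.
  rewrite -ge0_integral_nu// (ge0_integral_nu_comp_pi (u := fun x => `|(u x)%:E|))//.
  exact/measurableT_comp/measurable_EFinP.
apply: filterS (integrable_ae measurableT iabs) => x /(_ I) /fin_numPlt/andP[_ ?].
exact/integrableP.
Qed.

Lemma integral_eta_mul_comp_pi (F : M -> M) (u v : X -> R) x :
  measurable_fun setT F -> measurable_fun setT u -> measurable_fun setT v ->
  (eta x).-integrable setT (fun z => (u (pi (F z)))%:E) ->
  \int[eta x]_z (u (pi (F z)) * v (pi z))%:E = (markov_op pi eta F u x * v x)%:E.
Proof.
move=> mF mu' mv iu.
have mvpi := measurableT_comp mv measurable_pi.
rewrite -integral_fiber; last first.
  apply/measurable_EFinP/measurable_funM => //.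
  exact/(measurableT_comp mu')/(measurableT_comp measurable_pi).
rewrite (eq_integral (fun z => (u (pi (F z)))%:E * (v x)%:E)); last first.
  by move=> z; rewrite inE => /= <-; rewrite EFinM.
have iu_fiber := integrableS measurableT (measurable_fiber x) (@subsetT _ _) iu.
rewrite (integralZr (measurable_fiber x) iu_fiber) integral_fiber; last first.
  exact: measurable_int iu.
by rewrite markov_opE// EFinM fineK// integrable_fin_num.
Qed.

Lemma integral_markov_op_mul (F : M -> M) (u v : X -> R) : nu_preserving F ->
  sq_integrable mu u -> sq_integrable mu v ->
  \int[mu]_x (markov_op pi eta F u x * v x)%:E =
  \int[nu]_z (u (pi (F z)) * v (pi z))%:E.
Proof.
move=> pF su sv; have [mu' _] := su; have [mv _] := sv; have mF := pF.1.
have iuv : nu.-integrable setT (fun z => (u (pi (F z)) * v (pi z))%:E).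
  apply: integrable_mul_of_sq; last 2 first.
  - exact: integrable_nu_sq_comp_pi.
  - exact: (integrable_nu_sq_comp_pi (F := id)).
  - exact/(measurableT_comp mu')/(measurableT_comp measurable_pi).
  - exact: measurableT_comp mv measurable_pi.
rewrite integral_nu//; apply: ae_eq_integral => //.
- exact/measurable_EFinP/measurable_funM/mv/measurable_markov_op.
- exact/measurable_integral_eta/(measurable_int _ iuv).
apply: filterS (ae_integrable_eta pF mu' (integrable_of_sq mu' su.2)).
by move=> x iu _; rewrite integral_eta_mul_comp_pi.
Qed.

Section symmetric_system.
Variables (T Tinv Jt St : M -> M) (J : X -> X).
Hypotheses (nu_preserving_T : nu_preserving T) (TK : cancel T Tinv).
Hypotheses (nu_preserving_Jt : nu_preserving Jt)
  (TJt : forall xi, T (Jt xi) = Jt (Tinv xi)) (Jt_J : induced_map pi Jt J).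
Hypotheses (nu_preserving_St : nu_preserving St)
  (TSt : forall xi, T (St xi) = St (T xi)) (St_J : induced_map pi St J).

(* Transport by the time reversal [Jt], then by [T], then back by the
   symmetry [St]: both [Jt] and [St] induce [J] on [X]. *)
Lemma integral_nu_swap (f g : X -> R) :
  measurable_fun setT f -> measurable_fun setT g ->
  \int[nu]_z (f (pi (T z)) * g (pi z))%:E = \int[nu]_z (f (pi z) * g (pi (T z)))%:E.
Proof.
move=> mf mg; have [mT _] := nu_preserving_T.
have mfpi := measurableT_comp mf measurable_pi.
have mgpi := measurableT_comp mg measurable_pi.
have mfTg : measurable_fun setT (fun z => (f (pi (T z)) * g (pi z))%:E).
  exact/measurable_EFinP/measurable_funM/mgpi/(measurableT_comp mfpi).
have mfgT : measurable_fun setT (fun z => (f (pi z) * g (pi (T z)))%:E).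
  exact/measurable_EFinP/(measurable_funM mfpi)/(measurableT_comp mgpi).
pose K z := (f (J (pi (Tinv z))) * g (J (pi z)))%:E.
have KE z : (f (pi (T (Jt z))) * g (pi (Jt z)))%:E = K z by rewrite TJt -!Jt_J.
have mK : measurable_fun setT K.
  apply: eq_measurable_fun (measurableT_comp mfTg nu_preserving_Jt.1).
  by move=> z _; rewrite /= KE.
rewrite -(integral_nu_comp nu_preserving_Jt mfTg) (eq_integral K); last first.
  by move=> z _; rewrite KE.
rewrite -(integral_nu_comp nu_preserving_T mK).
rewrite -(integral_nu_comp nu_preserving_St mfgT).
by apply: eq_integral => z _; rewrite /K TK TSt -!St_J.
Qed.

Lemma integral_markov_opC (f g : X -> R) :
  sq_integrable mu f -> sq_integrable mu g ->
  \int[mu]_x (markov_op pi eta T f x * g x)%:E =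
  \int[mu]_x (f x * markov_op pi eta T g x)%:E.
Proof.
move=> sf sg.
rewrite (integral_markov_op_mul nu_preserving_T sf sg) integral_nu_swap; last 2 first.
- exact: sf.1.
- exact: sg.1.
under [RHS]eq_integral do rewrite mulrC.
rewrite (integral_markov_op_mul nu_preserving_T sg sf).
by apply: eq_integral => z _; rewrite mulrC.
Qed.

Hypothesis nu_preserving_Tinv : nu_preserving Tinv.

Lemma integral_markov_op_inv (f g : X -> R) :
  sq_integrable mu f -> sq_integrable mu g ->
  \int[mu]_x (markov_op pi eta Tinv f x * g x)%:E =
  \int[mu]_x (markov_op pi eta T f x * g x)%:E.
Proof.
move=> sf sg; have [mf _] := sf; have [mg _] := sg.
rewrite !integral_markov_op_mul// integral_nu_swap//.
have mfTinvg : measurable_fun setT (fun z => (f (pi (Tinv z)) * g (pi z))%:E).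
  apply/measurable_EFinP/measurable_funM; last exact: measurableT_comp mg measurable_pi.
  exact/(measurableT_comp mf)/(measurableT_comp measurable_pi)/nu_preserving_Tinv.1.
rewrite -(integral_nu_comp nu_preserving_T mfTinvg).
by under eq_integral do rewrite TK.
Qed.

Lemma markov_op_inv_ae (f : X -> R) : sq_integrable mu f ->
  {ae mu, forall x, markov_op pi eta Tinv f x = markov_op pi eta T f x}.
Proof.
move=> sf; have [mPinv iPinv] := sq_integrable_markov_op nu_preserving_Tinv sf.
have [mP iP] := sq_integrable_markov_op nu_preserving_T sf.
apply: (ae_eq_of_integral_mul mPinv mP iPinv iP) => g mg ig.
exact: integral_markov_op_inv.
Qed.

End symmetric_system.

End measured_fibration.

Theorem proposition2p4 (R : realType) (dX dM : measure_display)
  (X : measurableType dX) (M : measurableType dM)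
  (hX : forall x : X, measurable [set x])
  (pi : M -> X) (eta : X -> probability M R) (mu : probability X R)
  (T Tinv Jt Jtinv St Stinv : M -> M) (J S : X -> X) :
  measured_fibration pi eta ->
  (* T-invariance *)
  measurable_iso T Tinv -> preserves mu eta T ->
  (* time reversibility, with time-reversing map Jt inducing J *)
  measurable_iso Jt Jtinv -> fiber_preserving pi Jt -> preserves mu eta Jt ->
  (forall xi, T (Jt xi) = Jt (Tinv xi)) -> induced_map pi Jt J ->
  (* symmetry: an automorphism St inducing S = J *)
  measurable_iso St Stinv -> (forall xi, T (St xi) = St (T xi)) ->
  fiber_preserving pi St -> preserves mu eta St -> induced_map pi St S ->
  S = J ->
  (forall f g : X -> R, sq_integrable mu f -> sq_integrable mu g ->
     sq_integrable mu (markov_op pi eta T f) /\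
     (\int[mu]_x (markov_op pi eta T f x * g x)%:E)%E =
     (\int[mu]_x (f x * markov_op pi eta T g x)%:E)%E) /\
  (forall f : X -> R, sq_integrable mu f ->
     {ae mu, forall x, markov_op pi eta Tinv f x = markov_op pi eta T f x}).
Proof.
(* The fiber-preservation hypotheses are implied by [induced_map]. *)
move=> fibration iT pT iJ _ pJ TJt Jt_J iS TSt _ pS St_J SJ; subst S.
have [mT _ TK _] := iT; have [mJt _ _ _] := iJ; have [mSt _ _ _] := iS.
have nuT : nu_preserving eta mu T by [].
have nuJt : nu_preserving eta mu Jt by [].
have nuSt : nu_preserving eta mu St by [].
have nuTinv := nu_preserving_inv iT pT.
split=> [f g sf sg|f sf].
- split; first exact: sq_integrable_markov_op.
  exact: (integral_markov_opC hX fibration nuT TK nuJt TJt Jt_J nuSt TSt St_J).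
- exact: (markov_op_inv_ae hX fibration nuT TK nuJt TJt Jt_J nuSt TSt St_J nuTinv).
Qed.
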